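(* Let $n\ge 2$ and let $r_1,\ldots,r_n>0$ be such that there exists a homothetic square packing with radii $r_1,\ldots,r_n$ and $k$ contacts. Then for every $r_{n+1}>0$ there exists a homothetic square packing with radii $r_1,\ldots,r_{n+1}$ and at least $k+2$ contacts.
   Context: Let $S=\{(x,y): -1\le x,y\le 1\}$. A homothetic square packing with radii $r_1,\ldots,r_m$ is a set $\{S_1,\ldots,S_m\}$ with $S_i=r_iS+p_i$ for some $p_i\in\mathbb{R}^2$, such that distinct squares have disjoint interiors. A contact is an unordered pair $\{i,j\}$, $i\ne j$, with $S_i\cap S_j\ne\emptyset$. *)

From Stdlib Require Import Reals Lra Lia List.
Open Scope R_scope.

Definition point := (R * R)%type.

Definition unit_square (s : point) : Prop :=
  -1 <= fst s <= 1 /\ -1 <= snd s <= 1.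

Definition hsquare (r : R) (p : point) (z : point) : Prop :=
  exists s, unit_square s /\ z = (r * fst s + fst p, r * snd s + snd p).

Definition interior (A : point -> Prop) (z : point) : Prop :=
  exists eps, 0 < eps /\
    forall w, (fst w - fst z)^2 + (snd w - snd z)^2 < eps^2 -> A w.

Definition is_packing (m : nat) (r : nat -> R) (p : nat -> point) : Prop :=
  forall i j, (i < m)%nat -> (j < m)%nat -> i <> j ->
    forall z, ~ (interior (hsquare (r i) (p i)) z /\
                 interior (hsquare (r j) (p j)) z).

(* contact {i,j}, represented by the ordered pair (i,j) with i < j *)
Definition contact (m : nat) (r : nat -> R) (p : nat -> point) (ij : nat * nat) : Prop :=
  (fst ij < snd ij < m)%nat /\
  exists z, hsquare (r (fst ij)) (p (fst ij)) z /\ hsquare (r (snd ij)) (p (snd ij)) z.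

Definition num_contacts (m : nat) (r : nat -> R) (p : nat -> point) (k : nat) : Prop :=
  exists l : list (nat * nat), NoDup l /\
    (forall ij, In ij l <-> contact m r p ij) /\ length l = k.

From Pilot Require Import Defs.
From Stdlib Require Import Reals List Lra Lia ClassicalEpsilon Classical.
Open Scope R_scope.

(* In the sup-norm, the squares r S + p and r' S + p' meet iff
   |p - p'| <= r + r', and have disjoint interiors iff |p - p'| >= r + r'.
   Let A be a square whose top edge is highest.  If A touches another square B,
   move the new square around A, through the centres at distance r_A + r_{n+1}
   from p_A, starting above the top-right corner of A, where it meets nothing
   but A, towards the centre on the segment from p_A to p_B, where it overlaps
   B.  By the intermediate value theorem applied to the least gap to the other
   squares, at some moment it touches A and some other square and overlaps
   nothing.  If A touches nothing, A is taken out; the new square is put on the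
   top-right corner of the highest remaining square and A right next to it,
   which creates two contacts and destroys none. *)

Definition dist_inf (a b : point) : R :=
  Rmax (Rabs (fst a - fst b)) (Rabs (snd a - snd b)).

Lemma dist_inf_sym a b : dist_inf a b = dist_inf b a.
Proof. unfold dist_inf; rewrite (Rabs_minus_sym (fst a)), (Rabs_minus_sym (snd a)); reflexivity. Qed.

Lemma dist_inf_le_iff a b d :
  dist_inf a b <= d <-> Rabs (fst a - fst b) <= d /\ Rabs (snd a - snd b) <= d.
Proof.
  unfold dist_inf; split.
  - intros H; split; eapply Rle_trans; [apply Rmax_l | exact H | apply Rmax_r | exact H].
  - intros [Hx Hy]; apply Rmax_lub; assumption.
Qed.

Lemma dist_inf_triangle a b c : dist_inf a c <= dist_inf a b + dist_inf b c.
Proof.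
  apply dist_inf_le_iff; unfold dist_inf.
  pose proof (Rmax_l (Rabs (fst a - fst b)) (Rabs (snd a - snd b))).
  pose proof (Rmax_r (Rabs (fst a - fst b)) (Rabs (snd a - snd b))).
  pose proof (Rmax_l (Rabs (fst b - fst c)) (Rabs (snd b - snd c))).
  pose proof (Rmax_r (Rabs (fst b - fst c)) (Rabs (snd b - snd c))).
  split.
  - replace (fst a - fst c) with ((fst a - fst b) + (fst b - fst c)) by ring.
    eapply Rle_trans; [apply Rabs_triang | lra].
  - replace (snd a - snd c) with ((snd a - snd b) + (snd b - snd c)) by ring.
    eapply Rle_trans; [apply Rabs_triang | lra].
Qed.

Definition lerp (a b : point) (s : R) : point :=
  (fst a + s * (fst b - fst a), snd a + s * (snd b - snd a)).

Lemma dist_inf_lerp_l a b s : dist_inf (lerp a b s) a = Rabs s * dist_inf a b.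
Proof.
  unfold dist_inf, lerp; simpl.
  replace (fst a + s * (fst b - fst a) - fst a) with (s * (fst b - fst a)) by ring.
  replace (snd a + s * (snd b - snd a) - snd a) with (s * (snd b - snd a)) by ring.
  rewrite !Rabs_mult, RmaxRmult by apply Rabs_pos.
  rewrite (Rabs_minus_sym (fst b)), (Rabs_minus_sym (snd b)); reflexivity.
Qed.

Lemma dist_inf_lerp_r a b s : dist_inf (lerp a b s) b = Rabs (1 - s) * dist_inf a b.
Proof.
  unfold dist_inf, lerp; simpl.
  replace (fst a + s * (fst b - fst a) - fst b) with ((1 - s) * (fst a - fst b)) by ring.
  replace (snd a + s * (snd b - snd a) - snd b) with ((1 - s) * (snd a - snd b)) by ring.
  rewrite !Rabs_mult, RmaxRmult by apply Rabs_pos; reflexivity.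
Qed.

Lemma dist_inf_weighted_point p1 p2 r1 r2 : 0 < r1 -> 0 < r2 ->
  let z := lerp p1 p2 (r1 / (r1 + r2)) in
  dist_inf z p1 = r1 * (dist_inf p1 p2 / (r1 + r2)) /\
  dist_inf z p2 = r2 * (dist_inf p1 p2 / (r1 + r2)).
Proof.
  intros H1 H2; simpl.
  rewrite dist_inf_lerp_l, dist_inf_lerp_r.
  replace (1 - r1 / (r1 + r2)) with (r2 / (r1 + r2)) by (field; lra).
  rewrite !Rabs_pos_eq by (apply Rlt_le, Rdiv_lt_0_compat; lra).
  split; field; lra.
Qed.

Lemma hsquare_iff r p z : 0 < r -> hsquare r p z <-> dist_inf z p <= r.
Proof.
  intros Hr; rewrite dist_inf_le_iff; split.
  - intros [s [[Hx Hy] ->]]; simpl.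
    replace (r * fst s + fst p - fst p) with (r * fst s) by ring.
    replace (r * snd s + snd p - snd p) with (r * snd s) by ring.
    rewrite !Rabs_mult, (Rabs_pos_eq r) by lra.
    split; split_Rabs; nra.
  - intros [Hx Hy].
    exists ((fst z - fst p) / r, (snd z - snd p) / r); split.
    + unfold unit_square; simpl.
      split; split; (apply Rmult_le_reg_l with r; [lra|]);
        field_simplify; split_Rabs; lra.
    + destruct z as [zx zy]; simpl; f_equal; field; lra.
Qed.

Lemma interior_hsquare_iff r p z : 0 < r ->
  Defs.interior (hsquare r p) z <-> dist_inf z p < r.
Proof.
  intros Hr; split.
  - intros [e [He Hball]].
    assert (Hin : forall w, (fst w - fst z) ^ 2 + (snd w - snd z) ^ 2 < e ^ 2 ->
                           dist_inf w p <= r)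
      by (intros w Hw; apply hsquare_iff, Hball; assumption).
    pose proof (Hin (fst z + e / 2, snd z) ltac:(simpl; nra)) as H1.
    pose proof (Hin (fst z - e / 2, snd z) ltac:(simpl; nra)) as H2.
    pose proof (Hin (fst z, snd z + e / 2) ltac:(simpl; nra)) as H3.
    pose proof (Hin (fst z, snd z - e / 2) ltac:(simpl; nra)) as H4.
    rewrite dist_inf_le_iff in H1, H2, H3, H4; simpl in *.
    apply Rmax_lub_lt; split_Rabs; lra.
  - intros Hz.
    exists (r - dist_inf z p); split; [lra|].
    intros w Hw; apply hsquare_iff; trivial.
    apply Rle_trans with (dist_inf w z + dist_inf z p); [apply dist_inf_triangle|].
    enough (dist_inf w z < r - dist_inf z p) by lra.
    pose proof (pow2_ge_0 (fst w - fst z)); pose proof (pow2_ge_0 (snd w - snd z)).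
    apply Rmax_lub_lt; split_Rabs; nra.
Qed.

Lemma hsquares_meet_iff r1 p1 r2 p2 : 0 < r1 -> 0 < r2 ->
  (exists z, hsquare r1 p1 z /\ hsquare r2 p2 z) <-> dist_inf p1 p2 <= r1 + r2.
Proof.
  intros H1 H2; split.
  - intros [z [Hz1 Hz2]]; rewrite hsquare_iff in Hz1, Hz2 by assumption.
    rewrite dist_inf_sym in Hz1.
    pose proof (dist_inf_triangle p1 z p2); lra.
  - intros Hd; destruct (dist_inf_weighted_point p1 p2 r1 r2 H1 H2) as [Hz1 Hz2].
    assert (Hq : dist_inf p1 p2 / (r1 + r2) <= 1)
      by (apply Rmult_le_reg_r with (r1 + r2); [lra|]; field_simplify; lra).
    exists (lerp p1 p2 (r1 / (r1 + r2))).
    rewrite !hsquare_iff, Hz1, Hz2 by assumption; split; nra.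
Qed.

Lemma interiors_disjoint_iff r1 p1 r2 p2 : 0 < r1 -> 0 < r2 ->
  (forall z, ~ (Defs.interior (hsquare r1 p1) z /\ Defs.interior (hsquare r2 p2) z)) <->
  r1 + r2 <= dist_inf p1 p2.
Proof.
  intros H1 H2; split.
  - intros Hdisj; apply Rnot_lt_le; intros Hd.
    destruct (dist_inf_weighted_point p1 p2 r1 r2 H1 H2) as [Hz1 Hz2].
    assert (Hq : dist_inf p1 p2 / (r1 + r2) < 1)
      by (apply Rmult_lt_reg_r with (r1 + r2); [lra|]; field_simplify; lra).
    apply (Hdisj (lerp p1 p2 (r1 / (r1 + r2)))).
    rewrite !interior_hsquare_iff, Hz1, Hz2 by assumption; split; nra.
  - intros Hd z [Hz1 Hz2]; rewrite interior_hsquare_iff in Hz1, Hz2 by assumption.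
    rewrite dist_inf_sym in Hz1.
    pose proof (dist_inf_triangle p1 z p2); lra.
Qed.

Definition separated (m : nat) (r : nat -> R) (p : nat -> point) : Prop :=
  forall i j, (i < j < m)%nat -> r i + r j <= dist_inf (p i) (p j).

Lemma separated_neq m r p i j : separated m r p -> (i < m)%nat -> (j < m)%nat -> i <> j ->
  r i + r j <= dist_inf (p i) (p j).
Proof.
  intros Hsep Hi Hj Hij; destruct (Nat.lt_gt_cases i j) as [[Hlt | Hgt] _]; [exact Hij | |].
  - apply Hsep; lia.
  - rewrite dist_inf_sym, Rplus_comm; apply Hsep; lia.
Qed.

Lemma is_packing_iff m r p : (forall i, (i < m)%nat -> 0 < r i) ->
  is_packing m r p <-> separated m r p.
Proof.
  intros Hr; split.
  - intros Hpack i j Hij.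
    apply interiors_disjoint_iff; try apply Hr; try lia.
    apply Hpack; lia.
  - intros Hsep i j Hi Hj Hij.
    apply interiors_disjoint_iff; try apply Hr; trivial.
    apply (separated_neq m); trivial.
Qed.

Lemma contact_iff m r p i j : 0 < r i -> 0 < r j ->
  contact m r p (i, j) <-> (i < j < m)%nat /\ dist_inf (p i) (p j) <= r i + r j.
Proof. intros Hi Hj; unfold contact; simpl; rewrite hsquares_meet_iff by assumption; tauto. Qed.

Lemma enumerate_finite_pred {A : Type} (P : A -> Prop) (l0 : list A) :
  (forall x, P x -> In x l0) -> exists l, NoDup l /\ forall x, In x l <-> P x.
Proof.
  intros Hl0.
  set (decP := fun x => if excluded_middle_informative (P x) then true else false).
  exists (nodup (fun x y => excluded_middle_informative (x = y)) (filter decP l0)).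
  split; [apply NoDup_nodup|].
  intros x; rewrite nodup_In, filter_In; unfold decP.
  destruct (excluded_middle_informative (P x)) as [HP | HP];
    split; [tauto | auto | intros [_ E]; discriminate | tauto].
Qed.

Lemma num_contacts_exists m r p : exists k, num_contacts m r p k.
Proof.
  destruct (enumerate_finite_pred (contact m r p) (list_prod (seq 0 m) (seq 0 m)))
    as [l [Hnd Hl]].
  - intros [i j] [Hij _]; simpl in Hij.
    apply in_prod; apply in_seq; lia.
  - exists (length l), l; auto.
Qed.

Lemma num_contacts_ge m r p k l : num_contacts m r p k -> NoDup l ->
  (forall ij, In ij l -> contact m r p ij) -> (length l <= k)%nat.
Proof.
  intros [l' [_ [Hl' <-]]] Hnd Hl.
  apply NoDup_incl_length; trivial.
  intros ij Hij; apply Hl', Hl, Hij.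
Qed.

Lemma num_contacts_add_two n r p p' k a b : num_contacts n r p k ->
  (forall ij, contact n r p ij -> contact (S n) r p' ij) ->
  a <> b -> contact (S n) r p' (a, n) -> contact (S n) r p' (b, n) ->
  exists k', num_contacts (S n) r p' k' /\ (k + 2 <= k')%nat.
Proof.
  intros Hk Hold Hab Ha Hb.
  destruct Hk as [l [Hnd [Hl <-]]].
  destruct (num_contacts_exists (S n) r p') as [k' Hk'].
  exists k'; split; trivial.
  enough (length (l ++ (a, n) :: (b, n) :: nil) <= k')%nat
    by (rewrite length_app in *; simpl in *; lia).
  apply (num_contacts_ge _ _ _ _ _ Hk').
  - apply NoDup_app; trivial.
    + constructor; [simpl; intros [E | []]; apply Hab; congruence |].
      constructor; [simpl; tauto | constructor].
    + intros ij Hij Hnew; apply Hl in Hij; destruct Hij as [Hlt _].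
      simpl in Hnew; destruct Hnew as [<- | [<- | []]]; simpl in Hlt; lia.
  - intros ij Hij; apply in_app_or in Hij.
    destruct Hij as [Hij | [<- | [<- | []]]]; trivial.
    apply Hold, Hl, Hij.
Qed.

Lemma exists_argmax (P : nat -> Prop) (f : nat -> R) m :
  (exists i, (i < m)%nat /\ P i) ->
  exists j, (j < m)%nat /\ P j /\ forall i, (i < m)%nat -> P i -> f i <= f j.
Proof.
  induction m as [|m IH]; intros [i [Hi Pi]]; [lia|].
  destruct (classic (exists i, (i < m)%nat /\ P i)) as [Hex | Hnone].
  - destruct (IH Hex) as [j [Hj [Pj Hmax]]].
    destruct (classic (P m /\ f j < f m)) as [[Pm Hlt] | Hnot].
    + exists m; split; [lia|]; split; [exact Pm|].
      intros i' Hi' Pi'; destruct (Nat.eq_dec i' m) as [-> | Hne]; [lra|].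
      pose proof (Hmax i' ltac:(lia) Pi'); lra.
    + exists j; repeat split; [lia | trivial |].
      intros i' Hi' Pi'; destruct (Nat.eq_dec i' m) as [-> | Hne].
      * apply Rnot_lt_le; intros Hlt; apply Hnot; tauto.
      * apply Hmax; trivial; lia.
  - exists m; repeat split; [lia | |].
    + destruct (Nat.eq_dec i m) as [<- | Hne]; trivial.
      exfalso; apply Hnone; exists i; split; trivial; lia.
    + intros i' Hi' Pi'; destruct (Nat.eq_dec i' m) as [-> | Hne]; [lra|].
      exfalso; apply Hnone; exists i'; split; trivial; lia.
Qed.

Lemma continuity_Rabs f : continuity f -> continuity (fun t => Rabs (f t)).
Proof. intros Hf; apply (continuity_comp f Rabs); [exact Hf | apply Rcontinuity_abs]. Qed.

Lemma continuity_Rmax f g : continuity f -> continuity g ->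
  continuity (fun t => Rmax (f t) (g t)).
Proof.
  intros Hf Hg.
  assert (Habs : continuity (fun t => Rabs (f t - g t)))
    by (apply continuity_Rabs; reg).
  intros t.
  apply continuity_pt_locally_ext with (fun t => (f t + g t + Rabs (f t - g t)) / 2) 1;
    [lra | intros; unfold Rmax; destruct Rle_dec; split_Rabs; lra |].
  reg.
Qed.

Lemma continuity_Rmin f g : continuity f -> continuity g ->
  continuity (fun t => Rmin (f t) (g t)).
Proof.
  intros Hf Hg t.
  apply continuity_pt_locally_ext with (fun t => - Rmax (- f t) (- g t)) 1;
    [lra | intros; rewrite Ropp_Rmax, !Ropp_involutive; reflexivity |].
  apply continuity_pt_opp, continuity_Rmax; reg.
Qed.

Fixpoint family_min (G : nat -> R -> R) (i : nat) (l : list nat) (t : R) : R :=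
  match l with
  | nil => G i t
  | j :: l' => Rmin (G i t) (family_min G j l' t)
  end.

Lemma family_min_continuous G i l : (forall j, In j (i :: l) -> continuity (G j)) ->
  continuity (family_min G i l).
Proof.
  revert i; induction l as [|j l IH]; intros i HG; simpl.
  - apply HG; left; reflexivity.
  - apply continuity_Rmin; [apply HG; left; reflexivity|].
    apply IH; intros k Hk; apply HG; right; exact Hk.
Qed.

Lemma family_min_le G i l t j : In j (i :: l) -> family_min G i l t <= G j t.
Proof.
  revert i; induction l as [|k l IH]; intros i [<- | Hj]; simpl in *.
  - lra.
  - contradiction.
  - apply Rmin_l.
  - eapply Rle_trans; [apply Rmin_r | apply IH, Hj].
Qed.

Lemma family_min_attained G i l t :
  exists j, In j (i :: l) /\ family_min G i l t = G j t.
Proof.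
  revert i; induction l as [|k l IH]; intros i; simpl.
  - exists i; auto.
  - destruct (IH k) as [j [Hj E]]; rewrite E.
    apply Rmin_case_strong; intros _; [exists i | exists j]; simpl in *; tauto.
Qed.

Lemma family_first_zero (G : nat -> R -> R) (l : list nat) a b : a <= b ->
  (forall i, In i l -> continuity (G i)) ->
  (forall i, In i l -> 0 <= G i a) ->
  (exists j, In j l /\ G j b < 0) ->
  exists t, (forall i, In i l -> 0 <= G i t) /\ exists j, In j l /\ G j t = 0.
Proof.
  intros Hab HG Ha [j [Hj Hb]].
  destruct l as [|i l]; [contradiction|].
  destruct (family_min_attained G i l a) as [ja [Hja Ea]].
  destruct (IVT_cor (family_min G i l) a b (family_min_continuous G i l HG) Hab)
    as [t [_ Ht]].
  { pose proof (Ha ja Hja); pose proof (family_min_le G i l b j Hj); nra. }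
  exists t; split.
  - intros k Hk; rewrite <- Ht; apply family_min_le, Hk.
  - destruct (family_min_attained G i l t) as [jt [Hjt Et]].
    exists jt; split; congruence.
Qed.

Definition clamp1 (z : R) : R := Rmax (-1) (Rmin 1 z).

Lemma clamp1_cases z : (z <= -1 /\ clamp1 z = -1) \/ (-1 <= z <= 1 /\ clamp1 z = z) \/
  (1 <= z /\ clamp1 z = 1).
Proof. unfold clamp1, Rmax, Rmin; repeat destruct Rle_dec; lra. Qed.

(* For t in [0, 8] this runs once counterclockwise around the boundary of
   [-1, 1]^2, starting and ending at the corner (1, 1). *)
Definition unit_loop (t : R) : point :=
  (clamp1 (Rabs (t - 3) - 2), clamp1 (Rabs (t - 5) - 2)).

Lemma unit_loop_0 : unit_loop 0 = (1, 1).
Proof.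
  unfold unit_loop; f_equal;
    match goal with |- clamp1 ?z = _ =>
      destruct (clamp1_cases z) as [[? ->] | [[? ->] | [? ->]]] end; split_Rabs; lra.
Qed.

Lemma unit_loop_norm t : Rmax (Rabs (fst (unit_loop t))) (Rabs (snd (unit_loop t))) = 1.
Proof.
  unfold unit_loop; simpl.
  destruct (clamp1_cases (Rabs (t - 3) - 2)) as [[? ->] | [[? ->] | [? ->]]];
  destruct (clamp1_cases (Rabs (t - 5) - 2)) as [[? ->] | [[? ->] | [? ->]]];
  unfold Rmax; destruct Rle_dec; split_Rabs; lra.
Qed.

Lemma unit_loop_onto u v : Rmax (Rabs u) (Rabs v) = 1 ->
  exists t, 0 <= t /\ unit_loop t = (u, v).
Proof.
  intros Huv.
  assert (Hu : Rabs u <= 1) by (rewrite <- Huv; apply Rmax_l).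
  assert (Hv : Rabs v <= 1) by (rewrite <- Huv; apply Rmax_r).
  assert (Hside : v = 1 \/ u = -1 \/ v = -1 \/ u = 1)
    by (revert Huv; unfold Rmax; destruct Rle_dec; split_Rabs; lra).
  destruct Hside as [-> | [-> | [-> | ->]]];
    [exists (1 - u) | exists (3 - v) | exists (5 + u) | exists (7 + v)];
    (split; [split_Rabs; lra|]); unfold unit_loop; f_equal;
    match goal with |- clamp1 ?z = _ =>
      destruct (clamp1_cases z) as [[? ->] | [[? ->] | [? ->]]] end; split_Rabs; lra.
Qed.

Lemma continuity_unit_loop : continuity (fun t => fst (unit_loop t)) /\
  continuity (fun t => snd (unit_loop t)).
Proof.
  assert (Hclamp : forall f, continuity f -> continuity (fun t => clamp1 (f t))).
  { intros f Hf; unfold clamp1; apply continuity_Rmax; [reg|].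
    apply continuity_Rmin; [reg | exact Hf]. }
  assert (Habs : forall a, continuity (fun t => Rabs (t - a) - 2))
    by (intros a; apply continuity_minus; [apply continuity_Rabs|]; reg).
  split; apply Hclamp, Habs.
Qed.

Definition square_loop (c : point) (rho t : R) : point :=
  (fst c + rho * fst (unit_loop t), snd c + rho * snd (unit_loop t)).

Lemma square_loop_0 c rho : square_loop c rho 0 = (fst c + rho, snd c + rho).
Proof. unfold square_loop; rewrite unit_loop_0; simpl; f_equal; ring. Qed.

Lemma dist_inf_square_loop c rho t : 0 <= rho -> dist_inf (square_loop c rho t) c = rho.
Proof.
  intros Hrho; unfold dist_inf, square_loop; cbn [fst snd].
  replace (fst c + rho * fst (unit_loop t) - fst c) with (rho * fst (unit_loop t)) by ring.
  replace (snd c + rho * snd (unit_loop t) - snd c) with (rho * snd (unit_loop t)) by ring.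
  rewrite !Rabs_mult, (Rabs_pos_eq rho), RmaxRmult, unit_loop_norm by trivial; ring.
Qed.

Lemma square_loop_onto c rho q : 0 < rho -> dist_inf q c = rho ->
  exists t, 0 <= t /\ square_loop c rho t = q.
Proof.
  intros Hrho Hq.
  destruct (unit_loop_onto ((fst q - fst c) / rho) ((snd q - snd c) / rho)) as [t [Ht E]].
  - unfold Rdiv; rewrite !Rabs_mult, !(Rmult_comm _ (Rabs (/ rho))), RmaxRmult
      by apply Rabs_pos.
    fold (dist_inf q c); rewrite Hq, Rabs_inv, Rabs_pos_eq by lra; field; lra.
  - exists t; split; trivial.
    unfold square_loop; rewrite E; destruct q; simpl; f_equal; field; lra.
Qed.

Lemma continuity_dist_inf_square_loop c rho q :
  continuity (fun t => dist_inf q (square_loop c rho t)).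
Proof.
  destruct continuity_unit_loop as [Hx Hy].
  unfold dist_inf, square_loop; cbn [fst snd].
  apply continuity_Rmax; apply continuity_Rabs;
    apply (continuity_minus (fun _ => _)), (continuity_plus (fun _ => _)),
      (continuity_mult (fun _ => _)); first [assumption | reg].
Qed.

Definition relocate (p : nat -> point) (i : nat) (c : point) : nat -> point :=
  fun j => if Nat.eqb j i then c else p j.

Lemma relocate_eq p i c : relocate p i c i = c.
Proof. unfold relocate; rewrite Nat.eqb_refl; reflexivity. Qed.

Lemma relocate_neq p i c j : j <> i -> relocate p i c j = p j.
Proof. intros Hji; unfold relocate; apply Nat.eqb_neq in Hji; rewrite Hji; reflexivity. Qed.

Lemma separated_relocate m r p A c : (A < m)%nat ->
  (forall i j, (i < j < m)%nat -> i <> A -> j <> A -> r i + r j <= dist_inf (p i) (p j)) ->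
  (forall i, (i < m)%nat -> i <> A -> r i + r A <= dist_inf (p i) c) ->
  separated m r (relocate p A c).
Proof.
  intros HA Hp Hc i j Hij.
  destruct (Nat.eq_dec j A) as [-> | HjA].
  - rewrite relocate_eq, relocate_neq by lia; apply Hc; lia.
  - destruct (Nat.eq_dec i A) as [-> | HiA].
    + rewrite relocate_eq, relocate_neq, dist_inf_sym, Rplus_comm by trivial; apply Hc; lia.
    + rewrite !relocate_neq by trivial; apply Hp; trivial.
Qed.

Section Extension.

Variables (n : nat) (r : nat -> R) (p : nat -> point).
Hypothesis r_pos : forall i, (i <= n)%nat -> 0 < r i.
Hypothesis p_sep : separated n r p.

Definition gains_two_contacts (p' : nat -> point) : Prop :=
  separated (S n) r p' /\
  (forall ij, contact n r p ij -> contact (S n) r p' ij) /\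
  exists a b, a <> b /\ contact (S n) r p' (a, n) /\ contact (S n) r p' (b, n).

Definition top (i : nat) : R := snd (p i) + r i.

Lemma sep_below i c s : top i <= snd c - s -> r i + s <= dist_inf (p i) c.
Proof.
  unfold top, dist_inf; intros Hc.
  eapply Rle_trans; [| apply Rmax_r]; split_Rabs; lra.
Qed.

Lemma slide_to_second_contact A B : (A < n)%nat -> (B < n)%nat -> B <> A ->
  (forall i, (i < n)%nat -> top i <= top A) ->
  dist_inf (p A) (p B) <= r A + r B ->
  exists c, dist_inf (p A) c = r A + r n /\
    (forall i, (i < n)%nat -> i <> A -> r i + r n <= dist_inf (p i) c) /\
    exists B', (B' < n)%nat /\ B' <> A /\ dist_inf (p B') c <= r B' + r n.
Proof.
  intros HA HB HBA Htop HAB.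
  assert (HrA : 0 < r A) by (apply r_pos; lia).
  assert (HrB : 0 < r B) by (apply r_pos; lia).
  assert (Hrn : 0 < r n) by (apply r_pos; lia).
  set (rho := r A + r n).
  set (G := fun i t => dist_inf (p i) (square_loop (p A) rho t) - (r i + r n)).
  set (l := filter (fun i => negb (Nat.eqb i A)) (seq 0 n)).
  assert (Hl : forall i, In i l <-> (i < n)%nat /\ i <> A).
  { intros i; unfold l; rewrite filter_In, in_seq, Bool.negb_true_iff, Nat.eqb_neq; lia. }
  assert (HdAB : dist_inf (p A) (p B) = r A + r B)
    by (pose proof (separated_neq n r p A B p_sep HA HB (not_eq_sym HBA)); lra).
  set (q := lerp (p A) (p B) (rho / (r A + r B))).
  destruct (square_loop_onto (p A) rho q) as [t1 [Ht1 Eq]]; [unfold rho; lra | |].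
  { unfold q; rewrite dist_inf_lerp_l, HdAB, Rabs_pos_eq
      by (apply Rlt_le, Rdiv_lt_0_compat; unfold rho; lra).
    field; lra. }
  destruct (family_first_zero G l 0 t1) as [t [Hfree [B' [HB' HG]]]]; trivial.
  - intros i _; apply continuity_minus; [apply continuity_dist_inf_square_loop | reg].
  - intros i Hi; apply Hl in Hi; unfold G.
    enough (r i + r n <= dist_inf (p i) (square_loop (p A) rho 0)) by lra.
    apply sep_below; rewrite square_loop_0; simpl.
    pose proof (Htop i (proj1 Hi)); unfold top, rho in *; lra.
  - (* at t1 the new square is centred on the segment from A to B and overlaps B *)
    exists B; split; [apply Hl; split; trivial |].
    unfold G; rewrite Eq, dist_inf_sym; unfold q.
    assert (Hd : Rabs (1 - rho / (r A + r B)) * (r A + r B) = Rabs (r B - r n)).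
    { replace (r B - r n) with ((1 - rho / (r A + r B)) * (r A + r B))
        by (unfold rho; field; lra).
      rewrite Rabs_mult, (Rabs_pos_eq (r A + r B)) by lra; reflexivity. }
    rewrite dist_inf_lerp_r, HdAB, Hd; split_Rabs; lra.
  - exists (square_loop (p A) rho t); split; [|split].
    + rewrite dist_inf_sym; apply dist_inf_square_loop; unfold rho; lra.
    + intros i Hi HiA; pose proof (Hfree i (proj2 (Hl i) (conj Hi HiA))); unfold G in *; lra.
    + apply Hl in HB'; exists B'; repeat split; try apply HB'; unfold G in HG; lra.
Qed.

Lemma gains_two_contacts_touching A B : (A < n)%nat -> (B < n)%nat -> B <> A ->
  (forall i, (i < n)%nat -> top i <= top A) ->
  dist_inf (p A) (p B) <= r A + r B ->
  exists p', gains_two_contacts p'.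
Proof.
  intros HA HB HBA Htop HAB.
  destruct (slide_to_second_contact A B HA HB HBA Htop HAB)
    as [c [HcA [Hfree [B' [HB' [HB'A HcB']]]]]].
  exists (relocate p n c); split; [|split].
  - apply separated_relocate; [lia | intros i j Hij Hin Hjn; apply p_sep; lia |].
    intros i Hi Hin; destruct (Nat.eq_dec i A) as [-> | HiA];
      [rewrite HcA; lra | apply Hfree; lia].
  - intros [i j] Hij; pose proof (proj1 Hij) as Hlt; simpl in Hlt.
    rewrite contact_iff in Hij |- * by (apply r_pos; lia).
    rewrite !relocate_neq by lia; split; [lia | tauto].
  - exists A, B'; split; [auto|].
    split; apply contact_iff; try (apply r_pos; lia);
      rewrite relocate_eq, relocate_neq by lia; split; try lia; lra.
Qed.

Lemma gains_two_contacts_isolated A : (2 <= n)%nat -> (A < n)%nat ->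
  (forall B, (B < n)%nat -> B <> A -> r A + r B < dist_inf (p A) (p B)) ->
  exists p', gains_two_contacts p'.
Proof.
  intros Hn HA Hiso.
  destruct (exists_argmax (fun i => i <> A) top n) as [A2 [HA2 [HA2A Htop]]].
  { destruct (Nat.eq_dec A 0); [exists 1%nat | exists 0%nat]; lia. }
  assert (HrA : 0 < r A) by (apply r_pos; lia).
  assert (HrA2 : 0 < r A2) by (apply r_pos; lia).
  assert (Hrn : 0 < r n) by (apply r_pos; lia).
  (* Both new positions lie above the top edge of every square other than A. *)
  set (x := fst (p A2) + r A2).
  set (cn := (x + r n, top A2 + r n)).
  set (cA := (x + 2 * r n + r A, top A2 + r A)).
  set (p' := relocate (relocate p A cA) n cn).
  assert (Hp'n : p' n = cn) by apply relocate_eq.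
  assert (Hp'A : p' A = cA) by (unfold p'; rewrite relocate_neq, relocate_eq by lia; reflexivity).
  assert (Hp'old : forall i, (i < n)%nat -> i <> A -> p' i = p i)
    by (intros i Hi HiA; unfold p'; rewrite !relocate_neq by lia; reflexivity).
  assert (HnA : r A + r n <= dist_inf cA cn)
    by (unfold dist_inf; simpl; eapply Rle_trans; [| apply Rmax_l]; split_Rabs; lra).
  assert (Habove : forall i c s, (i < n)%nat -> i <> A -> snd c - s = top A2 ->
                                 r i + s <= dist_inf (p i) c)
    by (intros i c s Hi HiA Hc; apply sep_below; rewrite Hc; apply Htop; trivial).
  assert (HsepA : separated n r (relocate p A cA)).
  { apply separated_relocate; [exact HA | intros i j Hij _ _; apply p_sep, Hij |].
    intros i Hi HiA; apply Habove; simpl; trivial; ring. }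
  exists p'; split; [|split].
  - apply separated_relocate; [lia | intros i j Hij Hin Hjn; apply HsepA; lia |].
    intros i Hi Hin.
    destruct (Nat.eq_dec i A) as [-> | HiA]; [rewrite relocate_eq; exact HnA |].
    rewrite relocate_neq by trivial; apply Habove; simpl; try lia; ring.
  - intros [i j] Hij; pose proof (proj1 Hij) as Hlt; simpl in Hlt.
    rewrite contact_iff in Hij |- * by (apply r_pos; lia).
    assert (i <> A) by (intros ->; pose proof (Hiso j ltac:(lia) ltac:(lia)); lra).
    assert (j <> A)
      by (intros ->; rewrite dist_inf_sym in Hij; pose proof (Hiso i ltac:(lia) ltac:(lia)); lra).
    rewrite !Hp'old by lia; split; [lia | tauto].
  - exists A, A2; split; [auto|].
    split; apply contact_iff; try (apply r_pos; lia); rewrite Hp'n; split; try lia.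
    + rewrite Hp'A; apply dist_inf_le_iff; unfold top in *; simpl; split; split_Rabs; lra.
    + rewrite Hp'old by lia; apply dist_inf_le_iff; unfold x, top in *; simpl.
      split; split_Rabs; lra.
Qed.

Lemma exists_gains_two_contacts : (2 <= n)%nat -> exists p', gains_two_contacts p'.
Proof.
  intros Hn.
  destruct (exists_argmax (fun _ => True) top n) as [A [HA [_ Htop]]].
  { exists 0%nat; split; [lia | trivial]. }
  destruct (classic (exists B, (B < n)%nat /\ B <> A /\ dist_inf (p A) (p B) <= r A + r B))
    as [[B [HB [HBA HAB]]] | Hiso].
  - apply (gains_two_contacts_touching A B); auto.
  - apply (gains_two_contacts_isolated A); trivial.
    intros B HB HBA; apply Rnot_le_lt; intros HAB; apply Hiso; exists B; auto.
Qed.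

End Extension.

(* radii r_1..r_n are r 0 .. r (n-1); the new radius r_{n+1} is r n *)
Theorem lemma20 (n : nat) (r : nat -> R) (k : nat) :
  (2 <= n)%nat ->
  (forall i, (i < n)%nat -> 0 < r i) ->
  (exists p : nat -> point, is_packing n r p /\ num_contacts n r p k) ->
  0 < r n ->
  exists (p : nat -> point) (k' : nat),
    is_packing (S n) r p /\ num_contacts (S n) r p k' /\ (k + 2 <= k')%nat.
Proof.
  intros Hn Hr [p [Hpack Hk]] Hrn.
  assert (r_pos : forall i, (i <= n)%nat -> 0 < r i).
  { intros i Hi; destruct (Nat.eq_dec i n) as [-> | Hin]; [exact Hrn | apply Hr; lia]. }
  rewrite is_packing_iff in Hpack by exact Hr.
  destruct (exists_gains_two_contacts n r p r_pos Hpack Hn)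
    as [p' [Hsep [Hold [a [b [Hab [Ha Hb]]]]]]].
  destruct (num_contacts_add_two n r p p' k a b Hk Hold Hab Ha Hb) as [k' [Hk' Hkk']].
  exists p', k'; split; [|split; trivial].
  apply is_packing_iff; trivial.
  intros i Hi; apply r_pos; lia.
Qed.
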